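(* If $X$ and $Y$ are metric spaces which are coarsely homotopy equivalent, then $\mathrm{c\text{-}cat}(X)=\mathrm{c\text{-}cat}(Y)$.
   Context: Notation: $\mathbb{R}_+=[0,\infty)$. For metric spaces $X,Y$, a (not necessarily continuous) map $f:X\to Y$ is controlled if for every $r>0$ there is $S>0$ with $d(x,x')<r\Rightarrow d(f(x),f(x'))<S$; proper if preimages of bounded sets are bounded; coarse if both. For a coarse map $q:X\to\mathbb{R}_+$, the $q$-cylinder is $I_qX=\{(x,t)\in X\times\mathbb{R}_+ : t\le q(x)\}$ with the metric restricted from the product (sup) metric, and $i_0(x)=(x,0)$, $i_1(x)=(x,q(x))$. Coarse maps $f,g:X\to Y$ are coarsely homotopic if there exist a coarse $q:X\to\mathbb{R}_+$ and a coarse $H:I_qX\to Y$ with $H\circ i_0=f$, $H\circ i_1=g$. A coarse map $f:X\to Y$ is a coarse homotopy equivalence if there is a coarse map $g:Y\to X$ with $g\circ f$ and $f\circ g$ coarsely homotopic to $1_X$ and $1_Y$; $X,Y$ are then coarsely homotopy equivalent. A subset $A\subseteq X$ is coarsely categorical if there exist coarse maps $\alpha:\mathbb{R}_+\to X$ and $j:A\to\mathbb{R}_+$ such that $\alpha\circ j$ is coarsely homotopic to the inclusion $A\hookrightarrow X$. The (reduced) coarse Lusternik–Schnirelmann category $\mathrm{c\text{-}cat}(X)$ is the least $k$ such that $X$ can be covered by $k+1$ coarsely categorical subsets (and $\infty$ if none exists). *)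

From Stdlib Require Import Reals ClassicalEpsilon.
Open Scope R_scope.
Set Implicit Arguments.

Record MetricSpace := {
  ms_carrier :> Type;
  ms_dist : ms_carrier -> ms_carrier -> R;
  ms_dist_ge0 : forall x y, 0 <= ms_dist x y;
  ms_dist_eq0 : forall x y, ms_dist x y = 0 <-> x = y;
  ms_dist_sym : forall x y, ms_dist x y = ms_dist y x;
  ms_dist_tri : forall x y z, ms_dist x z <= ms_dist x y + ms_dist y z
}.

Definition controlled {X Y : Type} (dX : X -> X -> R) (dY : Y -> Y -> R)
  (f : X -> Y) : Prop :=
  forall r, 0 < r -> exists S, 0 < S /\
    forall x x', dX x x' < r -> dY (f x) (f x') < S.

Definition bounded {X : Type} (dX : X -> X -> R) (B : X -> Prop) : Prop :=
  exists r, forall x x', B x -> B x' -> dX x x' <= r.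

Definition proper {X Y : Type} (dX : X -> X -> R) (dY : Y -> Y -> R)
  (f : X -> Y) : Prop :=
  forall B : Y -> Prop, bounded dY B -> bounded dX (fun x => B (f x)).

Definition coarse {X Y : Type} (dX : X -> X -> R) (dY : Y -> Y -> R)
  (f : X -> Y) : Prop := controlled dX dY f /\ proper dX dY f.

Definition Rplus := { t : R | 0 <= t }.
Definition dRplus (s t : Rplus) : R := Rabs (proj1_sig s - proj1_sig t).

Definition cyl {X : Type} (q : X -> Rplus) :=
  { p : X * R | 0 <= snd p /\ snd p <= proj1_sig (q (fst p)) }.
Definition dcyl {X : Type} (dX : X -> X -> R) (q : X -> Rplus)
  (u v : cyl q) : R :=
  Rmax (dX (fst (proj1_sig u)) (fst (proj1_sig v)))
       (Rabs (snd (proj1_sig u) - snd (proj1_sig v))).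

Lemma i0_prf {X : Type} (q : X -> Rplus) (x : X) :
  0 <= snd (x, 0) /\ snd (x, 0) <= proj1_sig (q (fst (x, 0))).
Proof. simpl; split; [apply Rle_refl | exact (proj2_sig (q x))]. Qed.
Lemma i1_prf {X : Type} (q : X -> Rplus) (x : X) :
  0 <= snd (x, proj1_sig (q x)) /\
  snd (x, proj1_sig (q x)) <= proj1_sig (q (fst (x, proj1_sig (q x)))).
Proof. simpl; split; [exact (proj2_sig (q x)) | apply Rle_refl]. Qed.

Definition i0 {X : Type} (q : X -> Rplus) (x : X) : cyl q :=
  exist _ (x, 0) (i0_prf q x).
Definition i1 {X : Type} (q : X -> Rplus) (x : X) : cyl q :=
  exist _ (x, proj1_sig (q x)) (i1_prf q x).

Definition coarsely_homotopic {X Y : Type} (dX : X -> X -> R)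
  (dY : Y -> Y -> R) (f g : X -> Y) : Prop :=
  exists q : X -> Rplus, coarse dX dRplus q /\
  exists H : @cyl X q -> Y, coarse (@dcyl X dX q) dY H /\
    (forall x, H (@i0 X q x) = f x) /\ (forall x, H (@i1 X q x) = g x).

Definition coarse_homotopy_equivalence (X Y : MetricSpace) (f : X -> Y) : Prop :=
  coarse (ms_dist X) (ms_dist Y) f /\
  exists g : Y -> X, coarse (ms_dist Y) (ms_dist X) g /\
    coarsely_homotopic (ms_dist X) (ms_dist X) (fun x => g (f x)) (fun x => x) /\
    coarsely_homotopic (ms_dist Y) (ms_dist Y) (fun y => f (g y)) (fun y => y).

Definition coarsely_homotopy_equivalent (X Y : MetricSpace) : Prop :=
  exists f : X -> Y, coarse_homotopy_equivalence X Y f.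

Definition dsub {X : MetricSpace} (A : X -> Prop) (a b : {x : X | A x}) : R :=
  ms_dist X (proj1_sig a) (proj1_sig b).

Definition coarsely_categorical (X : MetricSpace) (A : X -> Prop) : Prop :=
  exists (alpha : Rplus -> X) (j : {x : X | A x} -> Rplus),
    coarse dRplus (ms_dist X) alpha /\ coarse (dsub A) dRplus j /\
    coarsely_homotopic (dsub A) (ms_dist X)
      (fun a => alpha (j a)) (fun a => proj1_sig a).

Definition cat_cover (X : MetricSpace) (k : nat) : Prop :=
  exists A : nat -> X -> Prop,
    (forall i, (i <= k)%nat -> coarsely_categorical X (A i)) /\
    (forall x : X, exists i, (i <= k)%nat /\ A i x).

(* Reduced coarse LS category: Some k for the least such k, None for infinity. *)
Definition ccat (X : MetricSpace) : option nat :=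
  match excluded_middle_informative (exists k, cat_cover X k) with
  | left _ => Some (epsilon (inhabits 0%nat)
                      (fun k => cat_cover X k /\
                                forall j, cat_cover X j -> (k <= j)%nat))
  | right _ => None
  end.

From Pilot Require Import Defs.
From Stdlib Require Import Reals.
From Stdlib Require Import Lra Classical FunctionalExtensionality PropExtensionality.
Open Scope R_scope.
Set Implicit Arguments.
Unset Strict Implicit.

(* A coarse homotopy equivalence f : X -> Y with inverse g pulls a cover of Y by
   coarsely categorical sets back to one of X: if alpha o j is coarsely
   homotopic to the inclusion of B, then (g o alpha) o (j o f) is homotopic to
   g o f on f^-1(B), which is homotopic to the inclusion of f^-1(B).  The only
   real work is that coarse homotopies compose and concatenate; concatenation
   runs the first homotopy on heights [0, q1] and the second one on
   [q1, q1 + q2] of a cylinder of height q1 + q2. *)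

Ltac real_cases :=
  unfold Rmin, Rmax, Rabs in *;
  repeat match goal with
  | |- context [Rle_dec ?a ?b] => destruct (Rle_dec a b)
  | |- context [Rcase_abs ?a] => destruct (Rcase_abs a)
  | H : context [Rle_dec ?a ?b] |- _ => destruct (Rle_dec a b)
  | H : context [Rcase_abs ?a] |- _ => destruct (Rcase_abs a)
  end; lra.

Lemma Rabs_Rmin_sub_le a b c d :
  Rabs (Rmin a b - Rmin c d) <= Rabs (a - c) + Rabs (b - d).
Proof. real_cases. Qed.

Lemma Rabs_Rmax0_sub_le a b c d :
  Rabs (Rmax 0 (a - b) - Rmax 0 (c - d)) <= Rabs (a - c) + Rabs (b - d).
Proof. real_cases. Qed.

Section CoarseMaps.

Variables (X Y Z : Type) (dX : X -> X -> R) (dY : Y -> Y -> R) (dZ : Z -> Z -> R).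

Lemma controlled_comp (f : X -> Y) (g : Y -> Z) :
  controlled dX dY f -> controlled dY dZ g -> controlled dX dZ (fun x => g (f x)).
Proof.
  intros cf cg r hr.
  destruct (cf r hr) as [S [hS HS]]; destruct (cg S hS) as [T [hT HT]].
  exists T; split; auto.
Qed.

Lemma coarse_comp (f : X -> Y) (g : Y -> Z) :
  coarse dX dY f -> coarse dY dZ g -> coarse dX dZ (fun x => g (f x)).
Proof.
  intros [cf pf] [cg pg]; split; [exact (controlled_comp cf cg)|].
  intros B hB; exact (pf _ (pg B hB)).
Qed.

Lemma coarse_isometry (f : X -> Y) :
  (forall x x', dY (f x) (f x') = dX x x') -> coarse dX dY f.
Proof.
  intros Hf; split.
  - intros r hr; exists r; split; auto; intros x x'; rewrite Hf; auto.
  - intros B [r Hr]; exists r; intros x x' hx hx'; rewrite <- Hf; auto.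
Qed.

Lemma bounded_mono (A B : X -> Prop) :
  (forall x, A x -> B x) -> Defs.bounded dX B -> Defs.bounded dX A.
Proof. intros AB [r Hr]; exists r; auto. Qed.

Hypothesis dX_tri : forall x y z, dX x z <= dX x y + dX y z.

Lemma bounded_union (A1 A2 : X -> Prop) :
  Defs.bounded dX A1 -> Defs.bounded dX A2 -> Defs.bounded dX (fun x => A1 x \/ A2 x).
Proof.
  intros [r1 H1] [r2 H2].
  destruct (classic (exists x, A1 x)) as [[u Hu]|N1];
    [destruct (classic (exists x, A2 x)) as [[v Hv]|N2]|].
  - pose proof (Rle_abs (dX u v)); pose proof (Rle_abs (dX v u)).
    pose proof (Rabs_pos (dX u v)); pose proof (Rabs_pos (dX v u)).
    exists (r1 + r2 + Rabs (dX u v) + Rabs (dX v u)).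
    assert (r1 >= 0) by (specialize (H1 u u Hu Hu); specialize (dX_tri u u u); lra).
    assert (r2 >= 0) by (specialize (H2 v v Hv Hv); specialize (dX_tri v v v); lra).
    intros x y [a|a] [b|b].
    + specialize (H1 x y a b); lra.
    + pose proof (dX_tri x u y); pose proof (dX_tri u v y).
      pose proof (H1 x u a Hu); pose proof (H2 v y Hv b); lra.
    + pose proof (dX_tri x v y); pose proof (dX_tri v u y).
      pose proof (H2 x v a Hv); pose proof (H1 u y Hu b); lra.
    + specialize (H2 x y a b); lra.
  - exists r1; intros x y [a|a] [b|b]; auto; exfalso; apply N2; eauto.
  - exists r2; intros x y [a|a] [b|b]; auto; exfalso; apply N1; eauto.
Qed.

End CoarseMaps.

Section HeightFunctions.

Variables (X : Type) (dX : X -> X -> R).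

Definition qsum (q1 q2 : X -> Defs.Rplus) : X -> Defs.Rplus := fun x =>
  exist _ (proj1_sig (q1 x) + proj1_sig (q2 x))
    (Rplus_le_le_0_compat _ _ (proj2_sig (q1 x)) (proj2_sig (q2 x))).

Lemma bounded_Rplus_le (B : Defs.Rplus -> Prop) :
  Defs.bounded dRplus B -> exists M, forall s, B s -> proj1_sig s <= M.
Proof.
  intros [r Hr].
  destruct (classic (exists s, B s)) as [[s0 Hs0]|N].
  - exists (proj1_sig s0 + r); intros s Hs.
    specialize (Hr s s0 Hs Hs0); unfold dRplus in Hr.
    pose proof (Rle_abs (proj1_sig s - proj1_sig s0)); lra.
  - exists 0; intros s Hs; exfalso; eauto.
Qed.

Lemma bounded_Rplus_below (M : R) :
  Defs.bounded dRplus (fun s : Defs.Rplus => proj1_sig s <= M).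
Proof.
  exists M; intros [s hs] [s' hs']; unfold dRplus; simpl; intros.
  apply Rabs_le; lra.
Qed.

Lemma proper_Rplus_dominated (p q : X -> Defs.Rplus) :
  proper dX dRplus p -> (forall x, proj1_sig (p x) <= proj1_sig (q x)) ->
  proper dX dRplus q.
Proof.
  intros pp pq B hB; destruct (bounded_Rplus_le hB) as [M HM].
  apply bounded_mono with (B := fun x => proj1_sig (p x) <= M).
  - intros x hx; specialize (pq x); specialize (HM _ hx); lra.
  - exact (pp _ (bounded_Rplus_below M)).
Qed.

Lemma coarse_qsum (q1 q2 : X -> Defs.Rplus) :
  coarse dX dRplus q1 -> controlled dX dRplus q2 -> coarse dX dRplus (qsum q1 q2).
Proof.
  intros [cq1 pq1] cq2; split.
  - intros r hr.
    destruct (cq1 r hr) as [S1 [h1 H1]]; destruct (cq2 r hr) as [S2 [h2 H2]].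
    exists (S1 + S2); split; [lra|]; intros x x' hx.
    specialize (H1 x x' hx); specialize (H2 x x' hx); unfold dRplus in *; simpl.
    eapply Rle_lt_trans; [|apply Rplus_lt_compat; [exact H1|exact H2]].
    replace (_ + _ - _) with ((proj1_sig (q1 x) - proj1_sig (q1 x'))
                              + (proj1_sig (q2 x) - proj1_sig (q2 x'))) by ring.
    apply Rabs_triang.
  - apply (proper_Rplus_dominated pq1); intros x; simpl.
    pose proof (proj2_sig (q2 x)); simpl in *; lra.
Qed.

End HeightFunctions.

Section Gluing.

Variables (Z Y : Type) (dZ : Z -> Z -> R) (dY : Y -> Y -> R).
Hypothesis dZ_sym : forall u v, dZ u v = dZ v u.
Hypothesis dY_tri : forall x y z, dY x z <= dY x y + dY y z.

Lemma controlled_glue (P : Z -> Prop) (Pdec : forall u, {P u} + {~ P u})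
    (G F e : Z -> Y) :
  controlled dZ dY G -> controlled dZ dY F -> controlled dZ dY e ->
  (forall u, ~ P u -> G u = e u) -> (forall u, P u -> F u = e u) ->
  controlled dZ dY (fun u => if Pdec u then G u else F u).
Proof.
  intros cG cF ce eG eF r hr.
  destruct (cG r hr) as [SG [hG HG]]; destruct (cF r hr) as [SF [hF HF]].
  destruct (ce r hr) as [Se [he He]].
  exists (SG + Se + SF); split; [lra|]; intros u v huv.
  assert (hvu : dZ v u < r) by (rewrite dZ_sym; exact huv).
  destruct (Pdec u) as [pu|pu]; destruct (Pdec v) as [pv|pv].
  - specialize (HG u v huv); lra.
  - pose proof (HG u v huv); pose proof (He v u hvu); pose proof (HF u v huv).
    pose proof (dY_tri (G u) (G v) (F v)); pose proof (dY_tri (G v) (F u) (F v)).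
    rewrite (eG v pv), (eF u pu) in *; lra.
  - pose proof (HF u v huv); pose proof (He v u hvu); pose proof (HG u v huv).
    pose proof (dY_tri (F u) (F v) (G v)); pose proof (dY_tri (F v) (G u) (G v)).
    rewrite (eF v pv), (eG u pu) in *; lra.
  - specialize (HF u v huv); lra.
Qed.

End Gluing.

Section Cylinder.

Variables (X : Type) (dX : X -> X -> R).

Definition base (q : X -> Defs.Rplus) (u : cyl q) : X := fst (proj1_sig u).
Definition height (q : X -> Defs.Rplus) (u : cyl q) : R := snd (proj1_sig u).

Lemma height_i0 (q : X -> Defs.Rplus) (x : X) : height (i0 q x) = 0.
Proof. reflexivity. Qed.

Lemma height_i1 (q : X -> Defs.Rplus) (x : X) : height (i1 q x) = proj1_sig (q x).
Proof. reflexivity. Qed.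

Lemma height_bounds (q : X -> Defs.Rplus) (u : cyl q) :
  0 <= height u /\ height u <= proj1_sig (q (base u)).
Proof. exact (proj2_sig u). Qed.

Lemma cyl_eq (q : X -> Defs.Rplus) (u v : cyl q) :
  base u = base v -> height u = height v -> u = v.
Proof.
  destruct u as [[x t] p], v as [[x' t'] p']; unfold base, height; simpl.
  intros <- <-; f_equal; apply proof_irrelevance.
Qed.

Lemma dcyl_base_height (q : X -> Defs.Rplus) (u v : cyl q) :
  dcyl dX u v = Rmax (dX (base u) (base v)) (Rabs (height u - height v)).
Proof. reflexivity. Qed.

Lemma controlled_i0 (q : X -> Defs.Rplus) : controlled dX (@dcyl X dX q) (i0 q).
Proof.
  intros r hr; exists r; split; auto; intros x x' h; unfold dcyl; simpl.
  apply Rmax_lub_lt; auto; rewrite Rminus_diag, Rabs_R0; exact hr.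
Qed.

Lemma bounded_base_image (q : X -> Defs.Rplus) (C : cyl q -> Prop) :
  Defs.bounded (@dcyl X dX q) C ->
  Defs.bounded dX (fun x => exists u, C u /\ x = base u).
Proof.
  intros [r Hr]; exists r; intros x x' [u [hu ->]] [u' [hu' ->]].
  eapply Rle_trans; [apply Rmax_l|exact (Hr u u' hu hu')].
Qed.

Section BaseMaps.

Variables (q q' p : X -> Defs.Rplus) (c : cyl q -> cyl q').
Hypothesis p_controlled : controlled dX dRplus p.
Hypothesis base_c : forall u, base (c u) = base u.

Lemma controlled_cyl_map :
  (forall u v, Rabs (height (c u) - height (c v))
               <= Rabs (height u - height v) + dRplus (p (base u)) (p (base v))) ->
  controlled (@dcyl X dX q) (@dcyl X dX q') c.
Proof.
  intros hc r hr; destruct (p_controlled hr) as [S [hS HS]].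
  exists (r + S); split; [lra|]; intros u v huv.
  rewrite dcyl_base_height in huv |- *; rewrite !base_c.
  apply Rmax_Rlt in huv as [hx ht]; specialize (HS _ _ hx); specialize (hc u v).
  apply Rmax_lub_lt; unfold dRplus in *; lra.
Qed.

Lemma bounded_cyl_preimage (P : cyl q -> Prop) (B : cyl q' -> Prop) :
  (forall u v, P u -> P v ->
     Rabs (height u - height v)
     <= Rabs (height (c u) - height (c v)) + dRplus (p (base u)) (p (base v))) ->
  Defs.bounded (@dcyl X dX q') B -> Defs.bounded (@dcyl X dX q) (fun u => P u /\ B (c u)).
Proof.
  intros hc [r Hr].
  assert (h1 : 0 < Rabs r + 1) by (pose proof (Rabs_pos r); lra).
  destruct (p_controlled h1) as [S [hS HS]].
  exists (Rabs r + S); intros u v [pu bu] [pv bv].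
  specialize (Hr _ _ bu bv); specialize (hc u v pu pv); pose proof (Rle_abs r).
  rewrite dcyl_base_height, !base_c in Hr.
  pose proof (Rle_trans _ _ _ (Rmax_l _ _) Hr) as hx.
  pose proof (Rle_trans _ _ _ (Rmax_r _ _) Hr) as ht.
  specialize (HS (base u) (base v) ltac:(lra)).
  rewrite dcyl_base_height; apply Rmax_lub; unfold dRplus in *; lra.
Qed.

End BaseMaps.

Lemma controlled_base (q : X -> Defs.Rplus) : controlled (@dcyl X dX q) dX (@base q).
Proof.
  intros r hr; exists r; split; auto; intros u v huv.
  rewrite dcyl_base_height in huv; exact (proj1 (proj1 (Rmax_Rlt _ _ _) huv)).
Qed.

Section Concatenation.

Hypothesis dX_sym : forall x y, dX x y = dX y x.
Hypothesis dX_tri : forall x y z, dX x z <= dX x y + dX y z.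
Variables (Y : Type) (dY : Y -> Y -> R).
Hypothesis dY_tri : forall x y z, dY x z <= dY x y + dY y z.

Lemma dcyl_sym (q : X -> Defs.Rplus) (u v : cyl q) : dcyl dX u v = dcyl dX v u.
Proof. rewrite !dcyl_base_height, dX_sym, Rabs_minus_sym; reflexivity. Qed.

Lemma dcyl_tri (q : X -> Defs.Rplus) (u v w : cyl q) :
  dcyl dX u w <= dcyl dX u v + dcyl dX v w.
Proof.
  rewrite !dcyl_base_height.
  pose proof (dX_tri (base u) (base v) (base w)).
  pose proof (Rabs_triang (height u - height v) (height v - height w)).
  replace (height u - height v + (height v - height w))
    with (height u - height w) in * by ring.
  real_cases.
Qed.

Section ConcatHomotopy.

Variables (q1 q2 : X -> Defs.Rplus).

Lemma concat_lower_prf (u : cyl (qsum q1 q2)) :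
  0 <= Rmin (height u) (proj1_sig (q1 (base u))) /\
  Rmin (height u) (proj1_sig (q1 (base u))) <= proj1_sig (q1 (base u)).
Proof.
  pose proof (height_bounds u); pose proof (proj2_sig (q1 (base u))).
  split; [apply Rmin_glb; lra | apply Rmin_r].
Qed.

Lemma concat_upper_prf (u : cyl (qsum q1 q2)) :
  0 <= Rmax 0 (height u - proj1_sig (q1 (base u))) /\
  Rmax 0 (height u - proj1_sig (q1 (base u))) <= proj1_sig (q2 (base u)).
Proof.
  pose proof (height_bounds u); pose proof (proj2_sig (q2 (base u))); simpl in *.
  split; [apply Rmax_l | apply Rmax_lub; lra].
Qed.

Definition concat_lower (u : cyl (qsum q1 q2)) : cyl q1 :=
  exist _ (base u, Rmin (height u) (proj1_sig (q1 (base u)))) (concat_lower_prf u).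

Definition concat_upper (u : cyl (qsum q1 q2)) : cyl q2 :=
  exist _ (base u, Rmax 0 (height u - proj1_sig (q1 (base u)))) (concat_upper_prf u).

Lemma height_concat_lower (u : cyl (qsum q1 q2)) :
  height (concat_lower u) = Rmin (height u) (proj1_sig (q1 (base u))).
Proof. reflexivity. Qed.

Lemma height_concat_upper (u : cyl (qsum q1 q2)) :
  height (concat_upper u) = Rmax 0 (height u - proj1_sig (q1 (base u))).
Proof. reflexivity. Qed.

Definition concat_homotopy (H1 : cyl q1 -> Y) (H2 : cyl q2 -> Y) (u : cyl (qsum q1 q2)) : Y :=
  if Rle_dec (height u) (proj1_sig (q1 (base u)))
  then H1 (concat_lower u) else H2 (concat_upper u).

Hypothesis q1_controlled : controlled dX dRplus q1.

Lemma controlled_concat_lower : controlled (@dcyl X dX _) (@dcyl X dX q1) concat_lower.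
Proof.
  apply (controlled_cyl_map q1_controlled); [reflexivity|]; intros u v.
  apply Rabs_Rmin_sub_le.
Qed.

Lemma controlled_concat_upper : controlled (@dcyl X dX _) (@dcyl X dX q2) concat_upper.
Proof.
  apply (controlled_cyl_map q1_controlled); [reflexivity|]; intros u v.
  apply Rabs_Rmax0_sub_le.
Qed.

Lemma concat_lower_above (u : cyl (qsum q1 q2)) :
  ~ height u <= proj1_sig (q1 (base u)) -> concat_lower u = i1 q1 (base u).
Proof. intros h; apply cyl_eq; [reflexivity|]; apply Rmin_right; rewrite height_i1; lra. Qed.

Lemma concat_upper_below (u : cyl (qsum q1 q2)) :
  height u <= proj1_sig (q1 (base u)) -> concat_upper u = i0 q2 (base u).
Proof. intros h; apply cyl_eq; [reflexivity|]; apply Rmax_left; rewrite height_i0; lra. Qed.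

Variables (H1 : cyl q1 -> Y) (H2 : cyl q2 -> Y).
Hypothesis H1_coarse : coarse (@dcyl X dX q1) dY H1.
Hypothesis H2_coarse : coarse (@dcyl X dX q2) dY H2.
Hypothesis junction : forall x, H1 (i1 q1 x) = H2 (i0 q2 x).

Lemma controlled_concat_homotopy :
  controlled (@dcyl X dX _) dY (concat_homotopy H1 H2).
Proof.
  apply (controlled_glue (@dcyl_sym _) dY_tri
           (fun u => Rle_dec (height u) (proj1_sig (q1 (base u))))
           (e := fun u => H2 (i0 q2 (base u)))).
  - exact (controlled_comp controlled_concat_lower (proj1 H1_coarse)).
  - exact (controlled_comp controlled_concat_upper (proj1 H2_coarse)).
  - exact (controlled_comp (controlled_comp (@controlled_base _) (controlled_i0 q2))
             (proj1 H2_coarse)).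
  - intros u h; rewrite concat_lower_above; auto.
  - intros u h; rewrite concat_upper_below; auto.
Qed.

Lemma proper_concat_homotopy :
  proper (@dcyl X dX _) dY (concat_homotopy H1 H2).
Proof.
  intros B hB.
  apply bounded_mono with (B := fun u =>
    (height u <= proj1_sig (q1 (base u)) /\ B (H1 (concat_lower u))) \/
    (~ height u <= proj1_sig (q1 (base u)) /\ B (H2 (concat_upper u)))).
  { intros u; unfold concat_homotopy; destruct Rle_dec; auto. }
  apply (bounded_union (@dcyl_tri _)).
  - apply (bounded_cyl_preimage (c := concat_lower) q1_controlled (fun _ => eq_refl)
             (P := fun u => height u <= proj1_sig (q1 (base u)))
             (B := fun w => B (H1 w))).
    + intros u v hu hv; rewrite !height_concat_lower, !Rmin_left by assumption.
      pose proof (Rabs_pos (proj1_sig (q1 (base u)) - proj1_sig (q1 (base v)))).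
      unfold dRplus; lra.
    + exact (proj2 H1_coarse B hB).
  - apply (bounded_cyl_preimage (c := concat_upper) q1_controlled (fun _ => eq_refl)
             (P := fun u => ~ height u <= proj1_sig (q1 (base u)))
             (B := fun w => B (H2 w))).
    + intros u v hu hv; rewrite !height_concat_upper, !Rmax_right by lra; unfold dRplus.
      set (a := proj1_sig (q1 (base u))); set (b := proj1_sig (q1 (base v))).
      replace (height u - height v) with ((height u - a - (height v - b)) + (a - b)) by ring.
      apply Rabs_triang.
    + exact (proj2 H2_coarse B hB).
Qed.

Lemma concat_homotopy_i0 (x : X) : concat_homotopy H1 H2 (i0 _ x) = H1 (i0 q1 x).
Proof.
  unfold concat_homotopy; destruct Rle_dec as [h|h].
  - f_equal; apply cyl_eq; [reflexivity|]; apply Rmin_left; exact h.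
  - exfalso; apply h; exact (proj2_sig (q1 x)).
Qed.

Lemma concat_homotopy_i1 (x : X) : concat_homotopy H1 H2 (i1 _ x) = H2 (i1 q2 x).
Proof.
  pose proof (proj2_sig (q1 x)); pose proof (proj2_sig (q2 x)).
  unfold concat_homotopy; destruct Rle_dec as [h|h]; cbn in *.
  - assert (hq2 : proj1_sig (q2 x) = 0) by lra.
    replace (concat_lower _) with (i1 q1 x)
      by (apply cyl_eq; [reflexivity|]; rewrite height_concat_lower; cbn; real_cases).
    rewrite junction; f_equal; apply cyl_eq; [reflexivity|].
    rewrite height_i0, height_i1; lra.
  - f_equal; apply cyl_eq; [reflexivity|].
    rewrite height_concat_upper, height_i1; cbn; real_cases.
Qed.

End ConcatHomotopy.

Lemma coarsely_homotopic_trans (f g h : X -> Y) :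
  coarsely_homotopic dX dY f g -> coarsely_homotopic dX dY g h ->
  coarsely_homotopic dX dY f h.
Proof.
  intros [q1 [cq1 [H1 [cH1 [H1i0 H1i1]]]]] [q2 [cq2 [H2 [cH2 [H2i0 H2i1]]]]].
  exists (qsum q1 q2); split; [exact (coarse_qsum cq1 (proj1 cq2))|].
  assert (junction : forall x, H1 (i1 q1 x) = H2 (i0 q2 x))
    by (intros x; rewrite H1i1, H2i0; reflexivity).
  exists (concat_homotopy H1 H2); repeat split.
  - exact (controlled_concat_homotopy (proj1 cq1) cH1 cH2 junction).
  - exact (proper_concat_homotopy (proj1 cq1) cH1 cH2).
  - intros x; rewrite concat_homotopy_i0; exact (H1i0 x).
  - intros x; rewrite (concat_homotopy_i1 junction); exact (H2i1 x).
Qed.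

End Concatenation.

End Cylinder.

Section Functoriality.

Variables (W X Y Z : Type) (dW : W -> W -> R) (dX : X -> X -> R).
Variables (dY : Y -> Y -> R) (dZ : Z -> Z -> R).

Definition cyl_pullback (h : W -> X) (q : X -> Defs.Rplus) (w : cyl (fun a => q (h a))) :
    cyl q :=
  exist _ (h (base w), height w) (proj2_sig w).

Lemma base_cyl_pullback (h : W -> X) (q : X -> Defs.Rplus) (w : cyl (fun a => q (h a))) :
  base (@cyl_pullback h q w) = h (base w).
Proof. reflexivity. Qed.

Lemma height_cyl_pullback (h : W -> X) (q : X -> Defs.Rplus) (w : cyl (fun a => q (h a))) :
  height (@cyl_pullback h q w) = height w.
Proof. reflexivity. Qed.

Lemma coarse_cyl_pullback (h : W -> X) (q : X -> Defs.Rplus) :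
  coarse dW dX h -> coarse (@dcyl W dW _) (@dcyl X dX q) (@cyl_pullback h q).
Proof.
  intros [ch ph]; split.
  - intros r hr; destruct (ch r hr) as [S [hS HS]].
    exists (S + r); split; [lra|]; intros w w' hw.
    rewrite dcyl_base_height in hw |- *; apply Rmax_Rlt in hw as [hb ht].
    rewrite !base_cyl_pullback, !height_cyl_pullback.
    specialize (HS _ _ hb); apply Rmax_lub_lt; lra.
  - intros C hC; pose proof hC as [r Hr].
    destruct (ph _ (bounded_base_image hC)) as [r' Hr'].
    exists (Rmax r' r); intros w w' hw hw'; rewrite dcyl_base_height.
    pose proof (Hr _ _ hw hw') as hww'.
    rewrite dcyl_base_height, !height_cyl_pullback in hww'.
    apply Rmax_lub.
    + eapply Rle_trans; [|apply Rmax_l].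
      apply Hr'; [exists (@cyl_pullback h q w) | exists (@cyl_pullback h q w')]; auto.
    + eapply Rle_trans; [|apply Rmax_r].
      exact (Rle_trans _ _ _ (Rmax_r _ _) hww').
Qed.

Lemma coarsely_homotopic_comp_l (k : Y -> Z) (f g : X -> Y) :
  coarse dY dZ k -> coarsely_homotopic dX dY f g ->
  coarsely_homotopic dX dZ (fun x => k (f x)) (fun x => k (g x)).
Proof.
  intros ck [q [cq [H [cH [Hi0 Hi1]]]]].
  exists q; split; [exact cq|]; exists (fun u => k (H u)); repeat split.
  - exact (proj1 (coarse_comp cH ck)).
  - exact (proj2 (coarse_comp cH ck)).
  - intros x; rewrite Hi0; reflexivity.
  - intros x; rewrite Hi1; reflexivity.
Qed.

Lemma coarsely_homotopic_comp_r (h : W -> X) (f g : X -> Y) :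
  coarse dW dX h -> coarsely_homotopic dX dY f g ->
  coarsely_homotopic dW dY (fun w => f (h w)) (fun w => g (h w)).
Proof.
  intros ch [q [cq [H [cH [Hi0 Hi1]]]]].
  exists (fun w => q (h w)); split; [exact (coarse_comp ch cq)|].
  exists (fun w => H (@cyl_pullback h q w)); repeat split.
  - exact (proj1 (coarse_comp (coarse_cyl_pullback q ch) cH)).
  - exact (proj2 (coarse_comp (coarse_cyl_pullback q ch) cH)).
  - intros w; rewrite <- Hi0; f_equal; apply cyl_eq; reflexivity.
  - intros w; rewrite <- Hi1; f_equal; apply cyl_eq; reflexivity.
Qed.

End Functoriality.

Section CategoricalCovers.

Variables (X Y : MetricSpace) (f : X -> Y) (g : Y -> X).
Hypothesis f_coarse : coarse (ms_dist X) (ms_dist Y) f.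
Hypothesis g_coarse : coarse (ms_dist Y) (ms_dist X) g.
Hypothesis gf_homotopic :
  coarsely_homotopic (ms_dist X) (ms_dist X) (fun x => g (f x)) (fun x => x).

Definition restrict_preimage (B : Y -> Prop) (a : {x : X | B (f x)}) : {y : Y | B y} :=
  exist B (f (proj1_sig a)) (proj2_sig a).

Lemma coarse_restrict_preimage (B : Y -> Prop) :
  coarse (dsub (fun x => B (f x))) (dsub B) (@restrict_preimage B).
Proof.
  destruct f_coarse as [cf pf]; split.
  - intros r hr; destruct (cf r hr) as [S [hS HS]]; exists S; split; auto.
    intros a a'; apply HS.
  - intros C [r Hr].
    destruct (pf (fun y => exists b : B y, C (exist B y b))) as [r' Hr'].
    { exists r; intros y y' [b hb] [b' hb']; exact (Hr _ _ hb hb'). }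
    exists r'; intros a a' ha ha'; apply Hr'; eexists; eassumption.
Qed.

Lemma coarse_proj1_sig (A : X -> Prop) : coarse (dsub A) (ms_dist X) (@proj1_sig X A).
Proof. apply coarse_isometry; reflexivity. Qed.

Lemma coarsely_categorical_preimage (B : Y -> Prop) :
  coarsely_categorical Y B -> coarsely_categorical X (fun x => B (f x)).
Proof.
  intros [alpha [j [calpha [cj HB]]]].
  pose proof (coarse_restrict_preimage B) as cfB.
  exists (fun t => g (alpha t)), (fun a => j (@restrict_preimage B a)).
  split; [exact (coarse_comp calpha g_coarse)|].
  split; [exact (coarse_comp cfB cj)|].
  apply coarsely_homotopic_trans with (g := fun a => g (f (proj1_sig a))).
  - intros; apply ms_dist_sym.
  - intros; apply ms_dist_tri.
  - intros; apply ms_dist_tri.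
  - exact (coarsely_homotopic_comp_r cfB (coarsely_homotopic_comp_l g_coarse HB)).
  - exact (coarsely_homotopic_comp_r (coarse_proj1_sig _) gf_homotopic).
Qed.

Lemma cat_cover_preimage (k : nat) : cat_cover Y k -> cat_cover X k.
Proof.
  intros [A [HA Hcov]]; exists (fun i x => A i (f x)); split.
  - intros i hi; exact (coarsely_categorical_preimage (HA i hi)).
  - intros x; exact (Hcov (f x)).
Qed.

End CategoricalCovers.

Theorem proposition2p16 (X Y : MetricSpace) :
  coarsely_homotopy_equivalent X Y -> ccat X = ccat Y.
Proof.
  intros [f [cf [g [cg [hgf hfg]]]]].
  assert (covers : cat_cover X = cat_cover Y).
  { apply functional_extensionality; intros k; apply propositional_extensionality; split.
    - exact (cat_cover_preimage cg cf hfg (k := k)).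
    - exact (cat_cover_preimage cf cg hgf (k := k)). }
  unfold ccat; rewrite covers; reflexivity.
Qed.
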